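(* Let $B$ be a monoid, let $r\ge1$, let $A=B\langle x_0,\dots,x_r\rangle$ and $X=\operatorname{MProj}(A)$. Then for every integer $n$, $\Gamma_*(\mathcal{O}_X(n))=A(n)$ as graded $A$-modules, where $\Gamma_*(\mathcal{F})=\bigoplus_{m\in\mathbb{Z}}\Gamma(X,\mathcal{F}(m))$.
   Context: A monoid is a commutative associative monoid with identity $1$ and absorbing element $0$; modules over it are pointed sets with a compatible action, and $\bigoplus$ denotes wedge sum. $B\langle x_0,\dots,x_r\rangle$ is the graded monoid with $A_0=B$ and $A_n=\{b\,x_0^{i_0}\cdots x_r^{i_r}: b\in B,\ i_j\ge0,\ \sum i_j=n\}$ (so $A_n$ consists only of $0$ for $n<0$), with the obvious multiplication. $X=\operatorname{MProj}(A)$ is the set of prime ideals not containing $A_{\ge1}$, covered by $D_+(x_i)\cong\operatorname{MSpec}(A_{(x_i)})$, where $A_{(f)}$ is the degree-$0$ part of the localization $A_f$. $A(n)$ is the graded module with $A(n)_i=A_{i+n}$, $\mathcal{O}_X(n)=\widetilde{A(n)}$ (sections on $D_+(f)$ are the degree-$n$ elements of $A_f$), and $\mathcal{F}(m)=\mathcal{F}\otimes_{\mathcal{O}_X}\mathcal{O}_X(m)$. $\Gamma_*(\mathcal{F})$ is the graded $A$-module with $\Gamma(X,\mathcal{F}(m))$ in degree $m$, where $a\in A_i$ acts via $a\in\Gamma(X,\mathcal O_X(i))$ and $\mathcal F(m)\otimes\mathcal O_X(i)\cong\mathcal F(m+i)$. *)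

From mathcomp Require Import all_boot all_algebra.
Set Implicit Arguments.
Unset Strict Implicit.
Unset Printing Implicit Defensive.
Import GRing.Theory Num.Theory.
Local Open Scope ring_scope.

Record cmonoid0 := CMonoid0 {
  mcar :> Type;
  mmul : mcar -> mcar -> mcar;
  mone : mcar;
  mzero : mcar;
  mmulA : forall x y z, mmul x (mmul y z) = mmul (mmul x y) z;
  mmulC : forall x y, mmul x y = mmul y x;
  mmul1 : forall x, mmul mone x = x;
  mmul0 : forall x, mmul mzero x = mzero }.

Section MonoidProj.
Variables (B : cmonoid0) (r : nat).

(* Representatives  b x_0^{e_0} ... x_r^{e_r}  of elements of A = B<x_0,...,x_r>. *)
Record pmon := PMon { pcoef : B; pexp : {ffun 'I_r.+1 -> nat} }.

(* Equality in A: all representatives with coefficient 0 are identified (the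
   element 0), otherwise representatives are equal iff identical. *)
Definition peq (a c : pmon) : Prop :=
  (pcoef a = mzero B /\ pcoef c = mzero B) \/ a = c.

Definition pmul (a c : pmon) : pmon :=
  PMon (mmul (pcoef a) (pcoef c)) [ffun i => (pexp a i + pexp c i)%N].
Definition pone : pmon := PMon (mone B) [ffun => 0%N].

Definition pdeg (a : pmon) : nat := (\sum_(i < r.+1) pexp a i)%N.

(* a lies in A_k (k an integer); A_k = {0} for k < 0. *)
Definition phomog (k : int) (a : pmon) : Prop :=
  pcoef a = mzero B \/ (pdeg a)%:Z = k.

Definition prime_ideal (P : pmon -> Prop) : Prop :=
  [/\ forall a c, peq a c -> P a -> P c,
      forall a, pcoef a = mzero B -> P a,
      forall a c, P a -> P (pmul a c),
      ~ P pone &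
      forall a c, P (pmul a c) -> P a \/ P c].

Definition mproj_pt (P : pmon -> Prop) : Prop :=
  prime_ideal P /\ exists a, (1 <= pdeg a)%N /\ ~ P a.

(* Zariski open set X \ V(S) determined by a subset S of A. *)
Definition in_open (S : pmon -> Prop) (P : pmon -> Prop) : Prop :=
  exists s, S s /\ ~ P s.

(* Element a/f of the homogeneous localization A(k)_(P) (degree k part). *)
Definition frac_ok (k : int) (P : pmon -> Prop) (x : pmon * pmon) : Prop :=
  ~ P x.2 /\ phomog (k + (pdeg x.2)%:Z)%R x.1.

Definition frac_eq (P : pmon -> Prop) (x y : pmon * pmon) : Prop :=
  exists g, ~ P g /\ peq (pmul g (pmul x.1 y.2)) (pmul g (pmul y.1 x.2)).

(* Global sections of O_X(k) = (A(k))~ (Hartshorne-style definition): a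
   function assigning to each point P an element of A(k)_(P), locally given by
   a single fraction a/f on an open neighbourhood. *)
Definition global_section (k : int) (s : (pmon -> Prop) -> pmon * pmon) : Prop :=
  (forall P, mproj_pt P -> frac_ok k P (s P)) /\
  (forall P, mproj_pt P ->
     exists S a f, in_open S P /\ phomog (k + (pdeg f)%:Z)%R a /\
       forall Q, mproj_pt Q -> in_open S Q ->
         ~ Q f /\ frac_eq Q (s Q) (a, f)).

Definition sec_eq (s t : (pmon -> Prop) -> pmon * pmon) : Prop :=
  forall P, mproj_pt P -> frac_eq P (s P) (t P).

Definition nat_sec (a : pmon) : (pmon -> Prop) -> pmon * pmon :=
  fun _ => (a, pone).

Definition sec_act (c : pmon) (s : (pmon -> Prop) -> pmon * pmon) :
  (pmon -> Prop) -> pmon * pmon :=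
  fun P => (pmul c (s P).1, (s P).2).

End MonoidProj.

(* A global section of O_X(k) is glued from fractions a_i/f_i on the charts
   D_+(x_i), where f_i is a unit times a power of x_i.  Testing the gluing
   condition at the prime generated by the non-units of B and the variables
   other than x_0, x_1 gives a_0 f_1 = a_1 f_0; as f_1 involves no x_0, the
   power of x_0 in f_0 divides a_0, so a_0/f_0 is an honest element a of A_k,
   and the same condition on every chart shows that the section is a/1. *)

From HB Require Import structures.
From mathcomp Require Import all_boot all_algebra zify.
From Stdlib Require Import Classical.
Import GRing.Theory Num.Theory.
Set Implicit Arguments.
Unset Strict Implicit.
Unset Printing Implicit Defensive.

Lemma mmul_assoc (B : cmonoid0) : associative (@mmul B).
Proof. exact: mmulA. Qed.

HB.instance Definition _ (B : cmonoid0) :=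
  Monoid.isComLaw.Build (mcar B) (mone B) (@mmul B)
    (@mmul_assoc B) (@mmulC B) (@mmul1 B).

Section MonoidUnits.
Variable B : cmonoid0.
Local Notation "x * y" := (@mmul B x y).

Lemma mmulr0 (x : B) : x * mzero B = mzero B.
Proof. by rewrite mmulC mmul0. Qed.

Definition munit (u : B) : Prop := exists v, v * u = mone B.

Lemma munitM (x y : B) : munit x -> munit y -> munit (x * y).
Proof. by move=> [v Hv] [w Hw]; exists (w * v); rewrite -mmulA (mmulA v) Hv mmul1. Qed.

Lemma munitMl (x y : B) : munit (x * y) -> munit x.
Proof. by move=> [v Hv]; exists (v * y); rewrite -mmulA (mmulC y). Qed.

Lemma munit_inj (u x y : B) : munit u -> u * x = u * y -> x = y.
Proof. by move=> [v Hv] E; rewrite -(mmul1 x) -(mmul1 y) -Hv -!mmulA E. Qed.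

Lemma munit_eq0 (u x : B) : munit u -> u * x = mzero B -> x = mzero B.
Proof. by move=> [v Hv] E; rewrite -(mmul1 x) -Hv -mmulA E mmulr0. Qed.

Lemma munit0 : mone B <> mzero B -> ~ munit (mzero B).
Proof. by move=> N [v Hv]; apply: N; rewrite -Hv mmulr0. Qed.

Lemma trivial_monoid (x : B) : mone B = mzero B -> x = mzero B.
Proof. by move=> E; rewrite -(mmul1 x) E mmul0. Qed.

End MonoidUnits.

Section FreeMonomials.
Variables (B : cmonoid0) (r : nat).
Local Notation pm := (pmon B r).

Lemma pmon_eq (a c : pm) :
  pcoef a = pcoef c -> (forall j, pexp a j = pexp c j) -> a = c.
Proof. by case: a c => ca ea [cc ec] /= -> E; congr PMon; apply/ffunP. Qed.

Lemma pexpM (a c : pm) j : pexp (pmul a c) j = (pexp a j + pexp c j)%N.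
Proof. by rewrite ffunE. Qed.

Lemma pmulC (a c : pm) : pmul a c = pmul c a.
Proof. by apply: pmon_eq => [|j]; [exact: mmulC | rewrite !pexpM addnC]. Qed.

Lemma pmulA (a c d : pm) : pmul a (pmul c d) = pmul (pmul a c) d.
Proof. by apply: pmon_eq => [|j]; [exact: mmulA | rewrite !pexpM addnA]. Qed.

Lemma pmulr1 (a : pm) : pmul a (pone B r) = a.
Proof.
by apply: pmon_eq => [|j]; rewrite /= ?ffunE ?addn0 // mmulC mmul1.
Qed.

Lemma pmulCA (a c d : pm) : pmul a (pmul c d) = pmul c (pmul a d).
Proof. by rewrite !pmulA (pmulC a c). Qed.

Lemma pdegM (a c : pm) : pdeg (pmul a c) = (pdeg a + pdeg c)%N.
Proof. by rewrite /pdeg -big_split; apply: eq_bigr => j _; rewrite pexpM. Qed.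

Lemma pdeg1 : pdeg (pone B r) = 0%N.
Proof. by rewrite /pdeg big1 // => j _; rewrite ffunE. Qed.

Lemma pmul_inj (g a c : pm) : munit (pcoef g) -> pmul g a = pmul g c -> a = c.
Proof.
move=> Ug E; apply: pmon_eq => [|j].
  exact: (munit_inj Ug (f_equal (@pcoef B r) E)).
by apply: (@addnI (pexp g j)); rewrite -!pexpM E.
Qed.

Lemma pmon_divides (a f : pm) : munit (pcoef f) ->
  (forall j, pexp f j <= pexp a j)%N -> exists q, pmul q f = a.
Proof.
move=> [v Hv] le_fa.
exists (PMon (mmul v (pcoef a)) [ffun j => (pexp a j - pexp f j)%N]).
apply: pmon_eq => [|j]; last by rewrite pexpM ffunE; have := le_fa j; lia.
by rewrite /= -mmulA (mmulC (pcoef a)) mmulA Hv mmul1.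
Qed.

Lemma peq_refl (a : pm) : peq a a.
Proof. by right. Qed.

Lemma peq_sym (a c : pm) : peq a c -> peq c a.
Proof. by case=> [[Ha Hc]|->]; [left | right]. Qed.

Lemma peq_trans (a c d : pm) : peq a c -> peq c d -> peq a d.
Proof. by case=> [[Ha Hc]|->] //; case=> [[_ Hd]|<-]; left. Qed.

Lemma peqM (d a c : pm) : peq a c -> peq (pmul d a) (pmul d c).
Proof. by case=> [[Ha Hc]|->]; [left; rewrite /= Ha Hc !mmulr0 | right]. Qed.

Lemma peq_cancel (g a c : pm) :
  munit (pcoef g) -> peq (pmul g a) (pmul g c) -> peq a c.
Proof.
move=> Ug [[Ha Hc]|E]; last by right; exact: pmul_inj Ug E.
by left; split; apply: (munit_eq0 Ug).
Qed.

Lemma peq_coef_neq0 (a c : pm) : pcoef a <> mzero B -> peq a c -> a = c.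
Proof. by move=> Na [[]|]. Qed.

Lemma phomog_cancel (k : int) (a f a0 : pm) : munit (pcoef f) ->
  peq (pmul a f) a0 -> phomog (k + (pdeg f)%:Z)%R a0 -> phomog k a.
Proof.
move=> Uf E h0; have coef0 : pcoef a0 = mzero B -> pcoef a = mzero B.
  move=> Z0; apply: (munit_eq0 Uf); rewrite mmulC.
  have : pcoef (pmul a f) = mzero B by case: E => [[]|->].
  by [].
case: h0 => [/coef0|deg0]; first by left.
case: (classic (pcoef a0 = mzero B)) => [/coef0|N0]; first by left.
right; apply: (@addIr _ (Posz (pdeg f))).
by rewrite -deg0 (peq_coef_neq0 N0 (peq_sym E)) pdegM PoszD.
Qed.

Lemma frac_eq_refl (P : pm -> Prop) x : prime_ideal P -> frac_eq P x x.
Proof. by case=> _ _ _ P1 _; exists (pone B r); split => //; exact: peq_refl. Qed.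

Lemma frac_eq_sym (P : pm -> Prop) x y : frac_eq P x y -> frac_eq P y x.
Proof. by case=> g [Pg E]; exists g; split => //; exact: peq_sym. Qed.

Lemma frac_eq_trans (P : pm -> Prop) x y z : prime_ideal P -> ~ P y.2 ->
  frac_eq P x y -> frac_eq P y z -> frac_eq P x z.
Proof.
case=> _ _ _ _ P_prime Py [g [Pg E1]] [h [Ph E2]].
exists (pmul (pmul g h) y.2); split; first by move/P_prime => [/P_prime [] |].
apply: (@peq_trans _ (pmul (pmul h z.2) (pmul g (pmul y.1 x.2)))).
  have -> : pmul (pmul (pmul g h) y.2) (pmul x.1 z.2) =
            pmul (pmul h z.2) (pmul g (pmul x.1 y.2)).
    apply: pmon_eq => [|j]; last by rewrite !pexpM; lia.
    by rewrite /= [LHS](AC (3*2) ((2*5)*(1*(4*3)))).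
  exact: peqM.
apply: (@peq_trans _ (pmul (pmul g x.2) (pmul h (pmul z.1 y.2)))).
  have -> : pmul (pmul h z.2) (pmul g (pmul y.1 x.2)) =
            pmul (pmul g x.2) (pmul h (pmul y.1 z.2)).
    apply: pmon_eq => [|j]; last by rewrite !pexpM; lia.
    by rewrite /= [LHS](AC (2*(1*2)) ((3*5)*(1*(4*2)))).
  exact: peqM.
right; apply: pmon_eq => [|j]; last by rewrite !pexpM; lia.
by rewrite /= [LHS](AC (2*(1*2)) (((1*3)*5)*(4*2))).
Qed.

Definition pvar (i : 'I_r.+1) : pm := PMon (mone B) [ffun j => nat_of_bool (j == i)].

Lemma pdeg_var i : pdeg (pvar i) = 1%N.
Proof.
rewrite /pdeg (bigD1 i) //= ffunE eqxx big1 // => j ji.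
by rewrite ffunE (negbTE ji).
Qed.

Lemma pmul_var_pred (a : pm) i : (0 < pexp a i)%N ->
  a = pmul (pvar i) (PMon (pcoef a) [ffun j => (pexp a j - (j == i))%N]).
Proof.
move=> ai_gt0; apply: pmon_eq => [|j]; first by rewrite /= mmul1.
by rewrite pexpM /= !ffunE; case: eqP => [->|] /=; lia.
Qed.

(* The prime ideal generated by the non-units of B and the variables x_j with
   j outside T; it is a point of D_+(x_i) exactly when i is in T. *)
Definition std_prime (T : pred 'I_r.+1) (a : pm) : Prop :=
  ~ munit (pcoef a) \/ exists j, ~~ T j /\ (0 < pexp a j)%N.

Lemma notin_std_prime (T : pred 'I_r.+1) a : ~ std_prime T a ->
  munit (pcoef a) /\ forall j, ~~ T j -> pexp a j = 0%N.
Proof.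
move=> Na; split; first by apply: NNPP => Ua; apply: Na; left.
by move=> j Tj; apply: NNPP => aj; apply: Na; right; exists j; split => //; lia.
Qed.

Lemma notin_std_prime_sub (T T' : pred 'I_r.+1) a :
  {subset T <= T'} -> ~ std_prime T a -> ~ std_prime T' a.
Proof.
move=> sTT' /notin_std_prime [Ua Za] [//|[j [T'j aj]]].
have Tj : ~~ T j by apply: contra T'j; exact: sTT'.
by rewrite Za in aj.
Qed.

Lemma std_prime_ideal (T : pred 'I_r.+1) :
  mone B <> mzero B -> prime_ideal (std_prime T).
Proof.
move=> N; split.
- by move=> a c [[_ Zc]|<-] // _; left; rewrite Zc; exact: munit0.
- by move=> a Za; left; rewrite Za; exact: munit0.
- move=> a c [Ua|[j [Tj aj]]]; first by left=> /munitMl.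
  by right; exists j; split => //; rewrite pexpM; lia.
- case=> [|[j [_]]]; last by rewrite ffunE.
  by apply; exists (mone B); exact: mmul1.
- move=> a c [Uac|[j [Tj acj]]].
    apply: NNPP => H; apply: Uac; apply: munitM.
      by apply: NNPP => Ua; apply: H; left; left.
    by apply: NNPP => Uc; apply: H; right; left.
  rewrite pexpM in acj; case: (posnP (pexp a j)) => aj.
    by right; right; exists j; split => //; lia.
  by left; right; exists j.
Qed.

Lemma std_prime_pt (T : pred 'I_r.+1) t :
  mone B <> mzero B -> T t -> mproj_pt (std_prime T).
Proof.
move=> N Tt; split; first exact: std_prime_ideal.
exists (pvar t); rewrite pdeg_var; split => //.
case=> [|[j [Tj]]]; first by apply; exists (mone B); exact: mmul1.
by rewrite ffunE; case: eqP => // jt; rewrite jt Tt in Tj.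
Qed.

Lemma mproj_pt_var (Q : pm -> Prop) : mproj_pt Q -> exists i, ~ Q (pvar i).
Proof.
case=> [[_ _ Q_ideal _ _] [a [deg_a Qa]]].
have [j aj] : exists j, (0 < pexp a j)%N.
  apply: NNPP => H; move: deg_a; rewrite /pdeg big1 // => j _.
  by apply/eqP; rewrite -leqn0 leqNgt; apply/negP => aj; apply: H; exists j.
by exists j => Qj; apply: Qa; rewrite (pmul_var_pred aj); exact: Q_ideal.
Qed.

Lemma notin_prime_var_pow (Q : pm -> Prop) i : prime_ideal Q -> ~ Q (pvar i) ->
  forall y, ~ std_prime (pred1 i) y -> ~ Q y.
Proof.
case=> _ _ Q_ideal Q1 Q_prime Qi y /notin_std_prime [].
move: {2}(pexp y i) (erefl (pexp y i)) => e; elim: e y => [|e IHe] y yi [v Hv] Zy Qy.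
  apply: Q1; have -> : pone B r = pmul y (PMon v [ffun => 0%N]).
    apply: pmon_eq => [|j]; first by rewrite /= mmulC Hv.
    by rewrite pexpM !ffunE; case: (eqVneq j i) => [->|/Zy ->]; rewrite ?yi.
  exact: Q_ideal.
move: Qy; rewrite (pmul_var_pred (_ : 0 < pexp y i)%N) ?yi //.
case/Q_prime => // /IHe; apply; first by rewrite /= ffunE eqxx yi subSS subn0.
  by exists v.
by move=> j ji; rewrite /= ffunE Zy.
Qed.

Definition chart_pt (i : 'I_r.+1) : pm -> Prop := std_prime (pred1 i).

Lemma chart_pt_mproj i : mone B <> mzero B -> mproj_pt (chart_pt i).
Proof. by move=> N; exact: (@std_prime_pt (pred1 i) i N (eqxx i)). Qed.

Lemma mproj_pt_near_chart (Q : pm -> Prop) : mproj_pt Q ->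
  exists i, forall S, in_open S (chart_pt i) -> in_open S Q.
Proof.
move=> Qpt; have [i Qi] := mproj_pt_var Qpt.
exists i => S [s [Ss Ps]]; exists s; split => //.
exact: notin_prime_var_pow Qpt.1 Qi s Ps.
Qed.

Lemma trivial_mproj_pt (P : pm -> Prop) : mone B = mzero B -> ~ mproj_pt P.
Proof. by move=> E [[_ P0 _ P1 _] _]; apply: P1; apply: P0; exact: trivial_monoid. Qed.

Lemma nat_sec_global (k : int) (a : pm) : phomog k a -> global_section k (nat_sec a).
Proof.
have Q1 Q : mproj_pt Q -> ~ Q (pone B r) by case=> [[]].
move=> ha; split=> [P Ppt|P Ppt]; first by split; [exact: Q1 | rewrite pdeg1 addr0].
exists (fun x => x = pone B r), a, (pone B r); split.
  by exists (pone B r); split => //; exact: Q1.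
split; first by rewrite pdeg1 addr0.
by move=> Q Qpt _; split; [exact: Q1 | exact: frac_eq_refl Qpt.1].
Qed.

Lemma nat_sec_act (c a : pm) : sec_eq (nat_sec (pmul c a)) (sec_act c (nat_sec a)).
Proof. by move=> P [P_prime _]; exact: frac_eq_refl. Qed.

Lemma nat_sec_inj (a a' : pm) : sec_eq (nat_sec a) (nat_sec a') -> peq a a'.
Proof.
move=> Eaa'; case: (classic (mone B = mzero B)) => [E|N].
  by left; split; apply: trivial_monoid.
have [g [/notin_std_prime [Ug _]]] := Eaa' _ (chart_pt_mproj ord0 N).
by rewrite /= !pmulr1; exact: peq_cancel.
Qed.

Section Surjectivity.
Variables (k : int) (s : (pm -> Prop) -> pm * pm).
Hypotheses (hr : (1 <= r)%N) (nontrivial : mone B <> mzero B)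
  (s_global : global_section k s).

Definition represents (S : pm -> Prop) (a f : pm) : Prop :=
  forall Q, mproj_pt Q -> in_open S Q -> ~ Q f /\ frac_eq Q (s Q) (a, f).

Lemma chart_rep i : exists S a f, in_open S (chart_pt i) /\
  phomog (k + (pdeg f)%:Z)%R a /\ represents S a f.
Proof. exact: s_global.2 _ (chart_pt_mproj i nontrivial). Qed.

Lemma chart_rep_denom i S a f : in_open S (chart_pt i) -> represents S a f ->
  munit (pcoef f) /\ forall j, j != i -> pexp f j = 0%N.
Proof. by move=> Si /(_ _ (chart_pt_mproj i nontrivial) Si) [/notin_std_prime]. Qed.

(* Two chart representatives agree at the point where only x_i and x_j survive. *)
Lemma chart_rep_compat i j S a f S' a' f' :
  in_open S (chart_pt i) -> represents S a f ->
  in_open S' (chart_pt j) -> represents S' a' f' ->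
  peq (pmul a f') (pmul a' f).
Proof.
pose T := [pred l | (l == i) || (l == j)].
have Ti : T i by rewrite /= eqxx.
have Tj : T j by rewrite /= eqxx orbT.
have Tpt : mproj_pt (std_prime T) := std_prime_pt nontrivial Ti.
have near l S0 : T l -> in_open S0 (chart_pt l) -> in_open S0 (std_prime T).
  move=> Tl [x [S0x Px]]; exists x; split => //.
  by apply: notin_std_prime_sub Px => l' /eqP ->.
move=> Si /(_ _ Tpt (near i _ Ti Si)) [_ Ea] Sj /(_ _ Tpt (near j _ Tj Sj)) [_ Ea'].
have [sT _] := s_global.1 _ Tpt.
have [g [/notin_std_prime [Ug _]]] :=
  frac_eq_trans Tpt.1 sT (frac_eq_sym Ea) Ea'.
exact: peq_cancel.
Qed.

Lemma chart0_rep_divides S0 a0 f0 : in_open S0 (chart_pt ord0) ->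
  represents S0 a0 f0 -> exists q, peq (pmul q f0) a0.
Proof.
move=> S0pt rep0; case: (classic (pcoef a0 = mzero B)) => [Z0|N0].
  by exists (PMon (mzero B) [ffun => 0%N]); left; rewrite /= mmul0.
have [Uf0 Zf0] := chart_rep_denom S0pt rep0.
pose i1 : 'I_r.+1 := Ordinal (hr : 1 < r.+1)%N.
have [S1 [a1 [f1 [S1pt [_ rep1]]]]] := chart_rep i1.
have [Uf1 Zf1] := chart_rep_denom S1pt rep1.
have E01 : pmul a0 f1 = pmul a1 f0.
  apply: peq_coef_neq0 (chart_rep_compat S0pt rep0 S1pt rep1) => /= E.
  by apply: N0; apply: (munit_eq0 Uf1); rewrite mmulC.
have [|q Eq] := pmon_divides Uf0 (a := a0); last by exists q; rewrite Eq; right.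
move=> j; case: (eqVneq j ord0) => [->|/Zf0 -> //].
have := f_equal (fun x => pexp x ord0) E01.
by rewrite !pexpM (Zf1 ord0) //; lia.
Qed.

Lemma global_section_nat_nontrivial : exists a, phomog k a /\ sec_eq s (nat_sec a).
Proof.
have [S0 [a0 [f0 [S0pt [h0 rep0]]]]] := chart_rep ord0.
have [Uf0 _] := chart_rep_denom S0pt rep0.
have [q Eq] := chart0_rep_divides S0pt rep0.
exists q; split; first exact: phomog_cancel Uf0 Eq h0.
move=> Q Qpt; have [i near_i] := mproj_pt_near_chart Qpt.
have [Si [ai [fi [Sipt [_ repi]]]]] := chart_rep i.
have [Qfi EQ] := repi _ Qpt (near_i _ Sipt).
have E_ai : peq ai (pmul q fi).
  apply: (@peq_cancel f0) => //.
  rewrite [pmul f0 (pmul q fi)]pmulCA (pmulC f0 fi) pmulCA.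
  apply: (@peq_trans _ (pmul fi a0)); last by apply: peqM; exact: peq_sym.
  by rewrite pmulC (pmulC fi); exact: peq_sym (chart_rep_compat S0pt rep0 Sipt repi).
apply: (frac_eq_trans (y := (ai, fi)) Qpt.1 Qfi EQ); exists (pone B r).
split; first by case: Qpt => [[]].
by rewrite /= pmulr1 !(pmulC (pone B r)) !pmulr1.
Qed.

End Surjectivity.

Lemma global_section_nat (k : int) (s : (pm -> Prop) -> pm * pm) :
  (1 <= r)%N -> global_section k s -> exists a, phomog k a /\ sec_eq s (nat_sec a).
Proof.
move=> hr s_global; case: (classic (mone B = mzero B)) => [E|N].
  exists (PMon (mzero B) [ffun => 0%N]); split=> [|P /(trivial_mproj_pt E) //].
  by left.
exact: global_section_nat_nontrivial.
Qed.

End FreeMonomials.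

Theorem mainTheorem7 (B : cmonoid0) (r : nat) (hr : (1 <= r)%N) (n : int) :
  forall m : int,
    (forall a : pmon B r, phomog (n + m)%R a -> global_section (n + m)%R (nat_sec a)) /\
    (forall (i : int) (c a : pmon B r), phomog i c -> phomog (n + m)%R a ->
       sec_eq (nat_sec (pmul c a)) (sec_act c (nat_sec a))) /\
    (forall a a' : pmon B r, phomog (n + m)%R a -> phomog (n + m)%R a' ->
       sec_eq (nat_sec a) (nat_sec a') -> peq a a') /\
    (forall s : (pmon B r -> Prop) -> pmon B r * pmon B r, global_section (n + m)%R s ->
       exists a : pmon B r, phomog (n + m)%R a /\ sec_eq s (nat_sec a)).
Proof.
move=> m; split; first exact: nat_sec_global.
split; first by move=> i c a _ _; exact: nat_sec_act.
split; first by move=> a a' _ _; exact: nat_sec_inj.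
by move=> s; exact: global_section_nat.
Qed.
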